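(* Let $\Lambda=\{(V_i,\Lambda_i,v_i)\}_{i\in I}$ and $\Lambda'=\{(V_i',\Lambda_i',v_i')\}_{i\in I}$ be g-fusion Bessel sequences in $H$ (with respect to $\{H_i\}_{i\in I}$) with bounds $B$ and $D$, respectively, and let $\Gamma=\{(W_j,\Gamma_j,w_j)\}_{j\in J}$ and $\Gamma'=\{(W_j',\Gamma_j',w_j')\}_{j\in J}$ be g-fusion Bessel sequences in $K$ (with respect to $\{K_j\}_{j\in J}$) with bounds $E$ and $F$, respectively. Suppose their synthesis operators satisfy $T_{\Lambda'}T_\Lambda^*=I_H$ and $T_{\Gamma'}T_\Gamma^*=I_K$. Then $\Lambda\otimes\Gamma=\{(V_i\otimes W_j,\Lambda_i\otimes\Gamma_j,v_iw_j)\}_{i,j}$ and $\Lambda'\otimes\Gamma'=\{(V_i'\otimes W_j',\Lambda_i'\otimes\Gamma_j',v_i'w_j')\}_{i,j}$ are g-fusion frames for $H\otimes K$.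
   Context: $H,K$ separable Hilbert spaces, $I,J\subseteq\mathbb{Z}$, $\{H_i\}$, $\{K_j\}$ Hilbert spaces; $V_i,V_i'\subseteq H$, $W_j,W_j'\subseteq K$ closed subspaces; $\Lambda_i,\Lambda_i'\in\mathcal{B}(H,H_i)$, $\Gamma_j,\Gamma_j'\in\mathcal{B}(K,K_j)$; all weights positive. $P_V$ is the orthogonal projection onto $V$. A family $\{(V_i,\Lambda_i,v_i)\}$ is a g-fusion Bessel sequence in $H$ with bound $B$ if $\sum_iv_i^2\|\Lambda_iP_{V_i}f\|^2\le B\|f\|^2$ for all $f\in H$; it is a g-fusion frame if additionally $A\|f\|^2\le\sum_iv_i^2\|\Lambda_iP_{V_i}f\|^2$ for some $A>0$. Its synthesis operator is $T_\Lambda:l^2(\{H_i\})\to H$, $T_\Lambda(\{f_i\})=\sum_iv_iP_{V_i}\Lambda_i^*f_i$, where $l^2(\{H_i\})=\{\{f_i\}:f_i\in H_i,\sum\|f_i\|^2<\infty\}$, with adjoint $T_\Lambda^*f=\{v_i\Lambda_iP_{V_i}f\}_i$. $H\otimes K$ is the Hilbert tensor product ($\langle f\otimes g,f'\otimes g'\rangle=\langle f,f'\rangle\langle g,g'\rangle$, $\|f\otimes g\|=\|f\|\|g\|$); $Q\otimes T$ is the bounded operator with $(Q\otimes T)(f\otimes g)=Qf\otimes Tg$; $P_{V\otimes W}=P_V\otimes P_W$. A family $\{(V_i\otimes W_j,\Lambda_i\otimes\Gamma_j,v_iw_j)\}_{i,j}$ is a g-fusion frame for $H\otimes K$ (w.r.t.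 $\{H_i\otimes K_j\}$) if there exist $0<A\le B<\infty$ with $A\|f\otimes g\|^2\le\sum_{i,j}v_i^2w_j^2\|(\Lambda_i\otimes\Gamma_j)P_{V_i\otimes W_j}(f\otimes g)\|^2\le B\|f\otimes g\|^2$ for all $f\in H,g\in K$. *)

From HB Require Import structures.
From mathcomp Require Import all_boot all_order all_algebra.
From mathcomp Require Import all_classical all_reals.
From mathcomp Require Import ereal esum.
From mathcomp Require Import complex.
Set Implicit Arguments. Unset Strict Implicit. Unset Printing Implicit Defensive.
Import Order.TTheory GRing.Theory Num.Theory.
Local Open Scope ring_scope.
Local Open Scope classical_set_scope.

Section Defs.
Variable R : realType.
Local Notation C := (R[i]).

Definition sq_norm_of (V : lmodType C) (ip : V -> V -> C) (x : V) : R :=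
  Num.sqrt (complex.Re (ip x x)).

Record hilbert := Hilbert {
  hspace :> lmodType C;
  hinner : hspace -> hspace -> C;
  hinnerDl : forall (a : C) (x y z : hspace),
      hinner (a *: x + y) z = a * hinner x z + hinner y z;
  hinnerC : forall x y : hspace, hinner y x = (hinner x y)^*;
  hinner_ge0 : forall x : hspace, 0 <= hinner x x;
  hinner_eq0 : forall x : hspace, hinner x x = 0 -> x = 0;
  hcomplete : forall u : nat -> hspace,
      (forall eps : R, 0 < eps -> exists N : nat, forall m n : nat,
          (N <= m)%N -> (N <= n)%N -> sq_norm_of hinner (u m - u n) < eps) ->
      exists l : hspace, forall eps : R, 0 < eps -> exists N : nat,
          forall n : nat, (N <= n)%N -> sq_norm_of hinner (u n - l) < eps
}.

Definition hnorm (H : hilbert) (x : H) : R := sq_norm_of (@hinner H) x.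

Definition hseparable (H : hilbert) : Prop :=
  exists e : nat -> H, forall (x : H) (eps : R), 0 < eps ->
    exists n : nat, hnorm (x - e n) < eps.

Definition closed_subspace (H : hilbert) (V : set H) : Prop :=
  [/\ V 0,
      (forall (a : C) (x y : H), V x -> V y -> V (a *: x + y)) &
      (forall x : H, (forall eps : R, 0 < eps -> exists y : H, V y /\ hnorm (x - y) < eps) -> V x)].

Definition is_orth_proj (H : hilbert) (V : set H) (P : H -> H) : Prop :=
  forall x : H, V (P x) /\ (forall y : H, V y -> hinner (x - P x) y = 0).

Definition bounded_op (H H' : hilbert) (T : H -> H') : Prop :=
  (forall (a : C) (x y : H), T (a *: x + y) = a *: T x + T y) /\
  exists M : R, forall x : H, hnorm (T x) <= M * hnorm x.

Definition is_adjoint (H H' : hilbert) (T : H -> H') (Ts : H' -> H) : Prop :=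
  forall (x : H) (y : H'), hinner (T x) y = hinner x (Ts y).

Definition gf_system (H : hilbert) (I : set int) (Hs : int -> hilbert)
  (V : int -> set H) (P : int -> H -> H) (L : forall i : int, H -> Hs i)
  (v : int -> R) : Prop :=
  forall i : int, I i ->
    [/\ closed_subspace (V i), is_orth_proj (V i) (P i), bounded_op (L i) & 0 < v i].

Definition gf_bessel (H : hilbert) (I : set int) (Hs : int -> hilbert)
  (V : int -> set H) (P : int -> H -> H) (L : forall i : int, H -> Hs i)
  (v : int -> R) (B : R) : Prop :=
  gf_system I V P L v /\
  forall f : H,
    (\esum_(i in I) ((v i) ^+ 2 * (hnorm (L i (P i f))) ^+ 2)%:E <= (B * (hnorm f) ^+ 2)%:E)%E.

(* (unconditional) convergence of sum_{i in I} u i to s in H *)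
Definition has_sum (H : hilbert) (I : set int) (u : int -> H) (s : H) : Prop :=
  forall eps : R, 0 < eps ->
    exists F0 : seq int, (forall i, i \in F0 -> I i) /\
      forall F : seq int, uniq F -> (forall i, i \in F -> I i) ->
        {subset F0 <= F} -> hnorm (\sum_(i <- F) u i - s) < eps.

(* T_{Lambda'} T_Lambda^* = I_H, where T_Lambda^* f = {v_i Lambda_i P_{V_i} f}_i
   and T_{Lambda'} {f_i} = sum_i v'_i P_{V'_i} Lambda'_i^* f_i
   (Ls' i is the adjoint Lambda'_i^* of Lambda'_i) *)
Definition synth_analysis_id (H : hilbert) (I : set int) (Hs : int -> hilbert)
  (P : int -> H -> H) (L : forall i : int, H -> Hs i) (v : int -> R)
  (P' : int -> H -> H) (Ls' : forall i : int, Hs i -> H) (v' : int -> R) : Prop :=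
  forall f : H,
    has_sum I (fun i => (v' i)%:C%C *: P' i (Ls' i ((v i)%:C%C *: L i (P i f)))) f.

(* A Hilbert tensor product of H and K: a Hilbert space with a bilinear map
   (f, g) |-> f (x) g preserving inner products, whose range spans a dense
   subspace. *)
Record tensor_model (H K : hilbert) := TensorModel {
  tm_space : hilbert;
  tm_tens : H -> K -> tm_space;
  tm_linl : forall (a : C) (f f' : H) (g : K),
      tm_tens (a *: f + f') g = a *: tm_tens f g + tm_tens f' g;
  tm_linr : forall (a : C) (f : H) (g g' : K),
      tm_tens f (a *: g + g') = a *: tm_tens f g + tm_tens f g';
  tm_inner : forall (f f' : H) (g g' : K),
      hinner (tm_tens f g) (tm_tens f' g') = hinner f f' * hinner g g';
  tm_dense : forall (z : tm_space) (eps : R), 0 < eps ->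
      exists s : seq (H * K), hnorm (z - \sum_(p <- s) tm_tens p.1 p.2) < eps
}.

(* {(V_i (x) W_j, Lambda_i (x) Gamma_j, v_i w_j)}_{i,j} is a g-fusion frame for
   H (x) K w.r.t. {H_i (x) K_j}; here
   (Lambda_i (x) Gamma_j) P_{V_i (x) W_j} (f (x) g)
     = (Lambda_i (x) Gamma_j) (P_{V_i} f (x) P_{W_j} g)
     = Lambda_i P_{V_i} f (x) Gamma_j P_{W_j} g. *)
Definition gf_tensor_frame (H K : hilbert) (I J : set int)
  (Hs Ks : int -> hilbert) (TM : tensor_model H K)
  (TMs : forall i j : int, tensor_model (Hs i) (Ks j))
  (P : int -> H -> H) (L : forall i : int, H -> Hs i) (v : int -> R)
  (Q : int -> K -> K) (G : forall j : int, K -> Ks j) (w : int -> R) : Prop :=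
  exists A B : R, 0 < A /\ A <= B /\
    forall (f : H) (g : K),
      let S := (\esum_(k in I `*` J)
                 ((v k.1 * w k.2) ^+ 2 *
                  (hnorm (tm_tens (TMs k.1 k.2) (L k.1 (P k.1 f)) (G k.2 (Q k.2 g)))) ^+ 2)%:E)%E in
      ((A * (hnorm (tm_tens TM f g)) ^+ 2)%:E <= S)%E /\
      (S <= (B * (hnorm (tm_tens TM f g)) ^+ 2)%:E)%E.
End Defs.

From HB Require Import structures.
From mathcomp Require Import all_boot all_order all_algebra.
From mathcomp Require Import all_classical all_reals.
From mathcomp Require Import ereal esum.
From mathcomp Require Import complex.
From mathcomp Require Import ring lra.
Import Order.TTheory GRing.Theory Num.Theory.
Local Open Scope ring_scope.
Local Open Scope classical_set_scope.

(* With a_i = v_i |Lambda_i P_{V_i} f| and b_i = v'_i |Lambda'_i P_{V'_i} f|,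
   pairing the reconstruction formula f = sum_i v'_i P_{V'_i} Lambda'_i^* v_i
   Lambda_i P_{V_i} f with f and applying Cauchy-Schwarz termwise gives
   |f|^2 <= sum_i a_i b_i.  By AM-GM and the Bessel bound sum_i b_i^2 <= D |f|^2
   this becomes |f|^2 <= (|D| + 1) sum_i a_i^2, a lower frame bound for Lambda;
   the situation is symmetric in Lambda and Lambda'.  On elementary tensors the
   frame sum of a tensor family is the product of the two frame sums, since
   |x (x) y| = |x| |y|, so frame bounds multiply. *)

Section RealInnerProduct.
Context {R : realType} {H : hilbert R}.

Definition reinner (x y : H) : R := complex.Re (hinner x y).

Lemma reinnerC (x y : H) : reinner x y = reinner y x.
Proof. by rewrite /reinner [in RHS]hinnerC; case: (hinner x y). Qed.

Lemma reinner_linearl (a : R) (x y z : H) :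
  reinner (a%:C%C *: x + y) z = a * reinner x z + reinner y z.
Proof.
rewrite /reinner hinnerDl.
by case: (hinner x z) => ? ?; case: (hinner y z) => ? ? /=; rewrite mul0r subr0.
Qed.

Lemma reinner0l (z : H) : reinner 0 z = 0.
Proof. by have := reinner_linearl 1 0 0 z; rewrite scaler0 addr0 mul1r; lra. Qed.

Lemma reinnerZl (a : R) (x z : H) : reinner (a%:C%C *: x) z = a * reinner x z.
Proof. by rewrite -[_ *: x]addr0 reinner_linearl reinner0l addr0. Qed.

Lemma reinnerDl (x y z : H) : reinner (x + y) z = reinner x z + reinner y z.
Proof. by have := reinner_linearl 1 x y z; rewrite rmorph1 scale1r mul1r. Qed.

Lemma reinnerNl (x z : H) : reinner (- x) z = - reinner x z.
Proof. by have := reinnerZl (-1) x z; rewrite rmorphN1 scaleN1r mulN1r. Qed.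

Lemma reinnerBl (x y z : H) : reinner (x - y) z = reinner x z - reinner y z.
Proof. by rewrite reinnerDl reinnerNl. Qed.

Lemma reinnerZr (a : R) (x z : H) : reinner z (a%:C%C *: x) = a * reinner z x.
Proof. by rewrite reinnerC reinnerZl reinnerC. Qed.

Lemma reinner_linearr (a : R) (x y z : H) :
  reinner z (a%:C%C *: x + y) = a * reinner z x + reinner z y.
Proof. by rewrite reinnerC reinner_linearl ![reinner _ z]reinnerC. Qed.

Lemma reinner_suml (F : seq int) (u : int -> H) (z : H) :
  reinner (\sum_(i <- F) u i) z = \sum_(i <- F) reinner (u i) z.
Proof.
elim: F => [|a F IH]; first by rewrite !big_nil reinner0l.
by rewrite !big_cons reinnerDl IH.
Qed.

Lemma hinner_diag (x : H) : hinner x x = (reinner x x)%:C%C.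
Proof.
have := hinner_ge0 x; rewrite lecE /= => /andP[/eqP Im0 _].
by move: Im0; rewrite /reinner; case: (hinner x x) => a b /= ->.
Qed.

Lemma reinner_ge0 (x : H) : 0 <= reinner x x.
Proof. by have := hinner_ge0 x; rewrite lecE => /andP[]. Qed.

Lemma hnorm_ge0 (x : H) : 0 <= hnorm x.
Proof. exact: sqrtr_ge0. Qed.

Lemma sqr_hnorm (x : H) : hnorm x ^+ 2 = reinner x x.
Proof. by rewrite sqr_sqrtr // reinner_ge0. Qed.

Lemma hnorm_eq0 (x : H) : hnorm x = 0 -> x = 0.
Proof.
move=> x0; apply: hinner_eq0.
by rewrite hinner_diag -sqr_hnorm x0 expr0n.
Qed.

Lemma hnorm_distC (x y : H) : hnorm (x - y) = hnorm (y - x).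
Proof.
rewrite /hnorm /sq_norm_of -!/(reinner _ _) -opprB.
by rewrite reinnerNl reinnerC reinnerNl opprK.
Qed.

Lemma reinner_le_hnormM (x y : H) : reinner x y <= hnorm x * hnorm y.
Proof.
set a := hnorm x; set b := hnorm y.
have [a0|a_neq0] := eqVneq a 0; first by rewrite (hnorm_eq0 _ a0) reinner0l a0 mul0r.
have [b0|b_neq0] := eqVneq b 0.
  by rewrite (hnorm_eq0 _ b0) reinnerC reinner0l b0 mulr0.
have ab_gt0 : 0 < a * b by rewrite mulr_gt0 // lt0r ?a_neq0 ?b_neq0 hnorm_ge0.
(* [0 <= |b x - a y|^2 = 2 a b (a b - <x, y>)] *)
have := reinner_ge0 (b%:C%C *: x + (- a)%:C%C *: y).
rewrite reinner_linearl !reinner_linearr !reinnerZl !reinnerZr.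
rewrite -!sqr_hnorm -/a -/b (reinnerC y x) => expand_ge0.
rewrite -subr_ge0 -(pmulr_rge0 _ ab_gt0); nra.
Qed.

Lemma orth_proj_sym {V : set H} {P : H -> H} : is_orth_proj V P ->
  forall x y : H, reinner (P x) y = reinner x (P y).
Proof.
move=> projP x y.
have [VPx orth_x] := projP x; have [VPy orth_y] := projP y.
have ex : reinner (x - P x) (P y) = 0 by rewrite /reinner orth_x.
have ey : reinner (y - P y) (P x) = 0 by rewrite /reinner orth_y.
rewrite reinnerBl in ex; rewrite reinnerBl (reinnerC (P y)) in ey.
by rewrite reinnerC; lra.
Qed.

End RealInnerProduct.

Lemma hnorm_tm_tens (R : realType) (H K : hilbert R) (TM : tensor_model H K)
  (f : H) (g : K) : hnorm (tm_tens TM f g) = hnorm f * hnorm g.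
Proof.
rewrite /hnorm /sq_norm_of tm_inner !hinner_diag -rmorphM /=.
by rewrite sqrtrM // reinner_ge0.
Qed.

Lemma ge0_esumZl (R : realType) (T : choiceType) (I : set T) (r : R)
  (a : T -> \bar R) : 0 <= r -> (forall i, 0 <= a i)%E ->
  (\esum_(i in I) (r%:E * a i) = r%:E * \esum_(i in I) a i)%E.
Proof.
move=> r_ge0 a_ge0; rewrite /esum -ereal_supZl //; last first.
  by apply/set0P; exists 0%E, set0; [exact: fsets_set0 | rewrite fsbig_set0].
rewrite image_comp; congr ereal_sup; apply: eq_imagel => A _ /=.
by rewrite ge0_mule_fsumr.
Qed.

Lemma esum_ge_sum (R : realType) (T : choiceType) (I : set T) (a : T -> R)
  (F : seq T) :
  uniq F -> (forall i, i \in F -> I i) ->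
  ((\sum_(i <- F) a i)%:E <= \esum_(i in I) (a i)%:E)%E.
Proof.
move=> uF FI; apply: esum_ge; exists [set` F].
  by split; [exact: finite_seq | move=> i /= /FI].
by rewrite -sumEFin fsbig_seq.
Qed.

Lemma le_of_approx_sum_mul {R : realType} {I : set int} {x y : int -> R}
  {N S c t : R} : 0 <= N -> 0 < t -> c <= t ->
  (forall F, uniq F -> (forall i, i \in F -> I i) -> \sum_(i <- F) x i ^+ 2 <= S) ->
  (forall F, uniq F -> (forall i, i \in F -> I i) -> \sum_(i <- F) y i ^+ 2 <= c * N) ->
  (forall e, 0 < e -> exists F, [/\ uniq F, (forall i, i \in F -> I i) &
      N <= \sum_(i <- F) x i * y i + e]) ->
  N <= t * S.
Proof.
move=> N_ge0 t_gt0 ct sumx sumy approx.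
apply/ler_addgt0Pr => e e_gt0.
have [F [uF FI NF]] := approx (e / 2) ltac:(by rewrite divr_gt0).
have amgm : \sum_(i <- F) x i * y i <=
    (t * \sum_(i <- F) x i ^+ 2 + (\sum_(i <- F) y i ^+ 2) / t) / 2.
  rewrite mulr_sumr mulr_suml -big_split mulr_suml /=.
  apply: ler_sum => i _.
  have -> : (t * x i ^+ 2 + y i ^+ 2 / t) / 2 =
      x i * y i + (t * x i - y i) ^+ 2 / (2 * t) by field; rewrite gt_eqF.
  by rewrite lerDl divr_ge0 ?sqr_ge0 // mulr_ge0 // ltW.
have Sx : t * \sum_(i <- F) x i ^+ 2 <= t * S by rewrite ler_pM2l // sumx.
have Sy : (\sum_(i <- F) y i ^+ 2) / t <= N.
  by rewrite ler_pdivrMr //; apply: le_trans (sumy F uF FI) _; rewrite mulrC ler_wpM2l.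
lra.
Qed.

Section GFusionFrame.
Context {R : realType} {H : hilbert R} {Hs : int -> hilbert R}.
Variable I : set int.

Definition gf_coef (P : int -> H -> H) (L : forall i, H -> Hs i) (v : int -> R)
  (f : H) (i : int) : R := v i * hnorm (L i (P i f)).

(* [c] is the reciprocal of the lower frame bound. *)
Definition gf_frame_bounds (P : int -> H -> H) (L : forall i, H -> Hs i)
  (v : int -> R) (c d : R) : Prop :=
  forall f : H, exists2 s : R,
    (\esum_(i in I) ((v i) ^+ 2 * (hnorm (L i (P i f))) ^+ 2)%:E = s%:E)%E &
    [/\ 0 <= s, hnorm f ^+ 2 <= c * s & s <= d * hnorm f ^+ 2].

Lemma gf_bessel_partial_sums {V P L v B} (f : H) : gf_bessel I V P L v B ->
  exists2 s : R,
    (\esum_(i in I) ((v i) ^+ 2 * (hnorm (L i (P i f))) ^+ 2)%:E = s%:E)%E &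
    [/\ 0 <= s, s <= B * hnorm f ^+ 2 &
        forall F, uniq F -> (forall i, i \in F -> I i) ->
          \sum_(i <- F) gf_coef P L v f i ^+ 2 <= s].
Proof.
move=> [_ bessel]; have := bessel f; set e := (\esum_(i in I) _)%E => eB.
have e_ge0 : (0 <= e)%E by apply: esum_ge0 => i _; rewrite lee_fin mulr_ge0 ?sqr_ge0.
have e_fin : e = (fine e)%:E by move: e_ge0 eB; case: e.
exists (fine e); first exact: e_fin.
split=> [||F uF FI]; rewrite -lee_fin -e_fin //.
under eq_bigr do rewrite /gf_coef exprMn.
exact: esum_ge_sum.
Qed.

Lemma hnorm_sq_approx_has_sum {u : int -> H} {f : H} : has_sum I u f ->
  forall e, 0 < e -> exists F, [/\ uniq F, (forall i, i \in F -> I i) &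
    hnorm f ^+ 2 <= \sum_(i <- F) reinner (u i) f + e].
Proof.
move=> sum_u e e_gt0.
have f_ge0 := hnorm_ge0 f.
set eps := e / (hnorm f + 1).
have eps_gt0 : 0 < eps by rewrite divr_gt0 // ltr_wpDl.
have eps_f : eps * hnorm f <= e by rewrite /eps mulrAC ler_pdivrMr ?ltr_wpDl //; nra.
have [F0 [F0I near_f]] := sum_u eps eps_gt0.
have FI i : i \in undup F0 -> I i by rewrite mem_undup => /F0I.
have F0_sub : {subset F0 <= undup F0} by move=> i; rewrite mem_undup.
exists (undup F0); split => //; first exact: undup_uniq.
have /ltW := near_f (undup F0) (undup_uniq _) FI F0_sub.
set s := \sum_(i <- undup F0) u i => s_near.
have := reinner_le_hnormM (f - s) f; rewrite reinnerBl hnorm_distC.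
have := ler_wpM2r f_ge0 s_near.
by rewrite -reinner_suml -/s sqr_hnorm; lra.
Qed.

Lemma reinner_dual_term_le {Hi : hilbert R} {V' : set H} {P' : H -> H}
  {L' : H -> Hi} {Ls' : Hi -> H} {a a' : R} (y : Hi) (f : H) :
  is_orth_proj V' P' -> is_adjoint L' Ls' -> 0 <= a -> 0 <= a' ->
  reinner (a'%:C%C *: P' (Ls' (a%:C%C *: y))) f <=
    (a * hnorm y) * (a' * hnorm (L' (P' f))).
Proof.
move=> projP' adj a_ge0 a'_ge0.
rewrite reinnerZl (orth_proj_sym projP') reinnerC /reinner -adj -/(reinner _ _).
rewrite reinnerZr.
have := reinner_le_hnormM (L' (P' f)) y.
have := mulr_ge0 a_ge0 a'_ge0; nra.
Qed.

Lemma gf_dual_lower_approx {V V' P P' L L' Ls' v v'} (f : H) :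
  gf_system I V P L v -> gf_system I V' P' L' v' ->
  (forall i, I i -> is_adjoint (L' i) (Ls' i)) ->
  synth_analysis_id I P L v P' Ls' v' ->
  forall e, 0 < e -> exists F, [/\ uniq F, (forall i, i \in F -> I i) &
    hnorm f ^+ 2 <= \sum_(i <- F) gf_coef P L v f i * gf_coef P' L' v' f i + e].
Proof.
move=> sysL sysL' adjL' recon e e_gt0.
have [F [uF FI approx]] := hnorm_sq_approx_has_sum (recon f) e e_gt0.
exists F; split => //; apply: le_trans approx _.
rewrite lerD2r big_seq [leRHS]big_seq; apply: ler_sum => i /FI Ii.
have [_ projP' _ v'_gt0] := sysL' i Ii; have [_ _ _ v_gt0] := sysL i Ii.
exact: reinner_dual_term_le projP' (adjL' i Ii) (ltW v_gt0) (ltW v'_gt0).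
Qed.

Lemma gf_frame_bounds_of_dual {V V' P P' L L' v v' B D} :
  gf_bessel I V P L v B -> gf_bessel I V' P' L' v' D ->
  (forall f e, 0 < e -> exists F, [/\ uniq F, (forall i, i \in F -> I i) &
    hnorm f ^+ 2 <= \sum_(i <- F) gf_coef P L v f i * gf_coef P' L' v' f i + e]) ->
  gf_frame_bounds P L v (`|D| + 1) B.
Proof.
move=> hL hL' approx f.
have [s es [s_ge0 sB partial]] := gf_bessel_partial_sums f hL.
have [s' _ [_ s'D partial']] := gf_bessel_partial_sums f hL'.
exists s => //; split => //.
have partial'D F uF FI := le_trans (partial' F uF FI) s'D.
apply: le_of_approx_sum_mul partial partial'D (approx f).
- exact: sqr_ge0.
- by rewrite ltr_wpDl.
- by rewrite (le_trans (ler_norm D)) // lerDl.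
Qed.

Lemma gf_dual_frame_bounds {V V' P P' L L' Ls' v v' B D} :
  gf_bessel I V P L v B -> gf_bessel I V' P' L' v' D ->
  (forall i, I i -> is_adjoint (L' i) (Ls' i)) ->
  synth_analysis_id I P L v P' Ls' v' ->
  gf_frame_bounds P L v (`|D| + 1) B /\ gf_frame_bounds P' L' v' (`|B| + 1) D.
Proof.
move=> hL hL' adjL' recon.
have approx f := gf_dual_lower_approx f hL.1 hL'.1 adjL' recon.
split; [apply: gf_frame_bounds_of_dual hL hL' _ | apply: gf_frame_bounds_of_dual hL' hL _].
  exact: approx.
move=> f e e_gt0; have [F [uF FI le_f]] := approx f e e_gt0.
by exists F; split => //; under eq_bigr do rewrite mulrC.
Qed.

End GFusionFrame.

Lemma esumM_setX {R : realType} {T1 T2 : choiceType} {I : set T1} {J : set T2}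
  {a : T1 -> R} {b : T2 -> R} {s t : R} :
  (forall i, 0 <= a i) -> (forall j, 0 <= b j) ->
  (\esum_(i in I) (a i)%:E = s%:E)%E -> (\esum_(j in J) (b j)%:E = t%:E)%E ->
  (\esum_(k in I `*` J) (a k.1 * b k.2)%:E = (s * t)%:E)%E.
Proof.
move=> a_ge0 b_ge0 sum_a sum_b.
have t_ge0 : 0 <= t by rewrite -lee_fin -sum_b esum_ge0 // => j _; rewrite lee_fin.
under eq_esum do rewrite EFinM.
rewrite -(esum_esum (J := fun=> J) (a := fun i j => (a i)%:E * (b j)%:E)%E); last first.
  by move=> i j _ _; rewrite mule_ge0 ?lee_fin.
under eq_esum => i _ do rewrite ge0_esumZl ?lee_fin // sum_b muleC.
by rewrite ge0_esumZl ?lee_fin // sum_a -EFinM mulrC.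
Qed.

Section TensorFrame.
Context {R : realType} {H K : hilbert R} {Hs Ks : int -> hilbert R}.
Context {I J : set int} {TM : tensor_model H K}
  {TMs : forall i j, tensor_model (Hs i) (Ks j)}.

Lemma gf_tensor_frame_of_bounds {P L v Q G w c1 d1 c2 d2} :
  0 < c1 -> 0 < c2 ->
  gf_frame_bounds I P L v c1 d1 -> gf_frame_bounds J Q G w c2 d2 ->
  gf_tensor_frame I J TM TMs P L v Q G w.
Proof.
move=> c1_gt0 c2_gt0 frameL frameG.
have A_gt0 : 0 < (c1 * c2)^-1 by rewrite invr_gt0 mulr_gt0.
exists (c1 * c2)^-1, ((c1 * c2)^-1 + `|d1| * `|d2|).
split=> //; split=> [|f g /=]; first by rewrite lerDl mulr_ge0.
have [s1 sum1 [s1_ge0 low1 up1]] := frameL f.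
have [s2 sum2 [s2_ge0 low2 up2]] := frameG g.
under eq_esum do rewrite hnorm_tm_tens !exprMn mulrACA.
rewrite (esumM_setX _ _ sum1 sum2) => [|i|j]; last 2 first.
- by rewrite mulr_ge0 ?sqr_ge0.
- by rewrite mulr_ge0 ?sqr_ge0.
rewrite hnorm_tm_tens exprMn !lee_fin.
set Nf := hnorm f ^+ 2 in low1 up1 *; set Ng := hnorm g ^+ 2 in low2 up2 *.
have Nf_ge0 : 0 <= Nf by exact: sqr_ge0.
have Ng_ge0 : 0 <= Ng by exact: sqr_ge0.
split.
- have -> : s1 * s2 = (c1 * c2)^-1 * ((c1 * s1) * (c2 * s2)).
    by field; rewrite !gt_eqF.
  by apply: ler_wpM2l; [exact: ltW | exact: ler_pM].
- have up : s1 * s2 <= (`|d1| * Nf) * (`|d2| * Ng).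
    apply: ler_pM => //.
      by rewrite (le_trans up1) // ler_wpM2r // ler_norm.
    by rewrite (le_trans up2) // ler_wpM2r // ler_norm.
  have := mulr_ge0 (ltW A_gt0) (mulr_ge0 Nf_ge0 Ng_ge0); nra.
Qed.

End TensorFrame.

Theorem theorem3p10 (R : realType) (H K : hilbert R)
  (sepH : hseparable H) (sepK : hseparable K)
  (I J : set int) (Hs Ks : int -> hilbert R)
  (* Lambda and Lambda' in H *)
  (V V' : int -> set H) (P P' : int -> H -> H)
  (L L' : forall i : int, H -> Hs i) (Ls' : forall i : int, Hs i -> H)
  (v v' : int -> R) (B D : R)
  (* Gamma and Gamma' in K *)
  (W W' : int -> set K) (Q Q' : int -> K -> K)
  (G G' : forall j : int, K -> Ks j) (Gs' : forall j : int, Ks j -> K)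
  (w w' : int -> R) (E F : R)
  (hL : gf_bessel I V P L v B) (hL' : gf_bessel I V' P' L' v' D)
  (hG : gf_bessel J W Q G w E) (hG' : gf_bessel J W' Q' G' w' F)
  (adjL' : forall i : int, I i -> is_adjoint (L' i) (Ls' i))
  (adjG' : forall j : int, J j -> is_adjoint (G' j) (Gs' j))
  (idH : synth_analysis_id I P L v P' Ls' v')
  (idK : synth_analysis_id J Q G w Q' Gs' w')
  (TM : tensor_model H K) (TMs : forall i j : int, tensor_model (Hs i) (Ks j)) :
  gf_tensor_frame I J TM TMs P L v Q G w /\
  gf_tensor_frame I J TM TMs P' L' v' Q' G' w'.
Proof.
have [frameL frameL'] := gf_dual_frame_bounds I hL hL' adjL' idH.
have [frameG frameG'] := gf_dual_frame_bounds J hG hG' adjG' idK.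
have pos (x : R) : 0 < `|x| + 1 by rewrite ltr_wpDl.
split.
- exact: gf_tensor_frame_of_bounds (pos D) (pos F) frameL frameG.
- exact: gf_tensor_frame_of_bounds (pos B) (pos E) frameL' frameG'.
Qed.
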